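(* Let $\mathrm{E}:\mathbb{R}^{n_1\times\dots\times n_d}\to\mathbb{R}$ be continuously differentiable with gradient $\nabla\mathrm{E}$ (with respect to the Euclidean inner product), and consider the gradient system $\dot A=-\nabla\mathrm{E}(A)$. Run the rank-augmenting TTN integrator (described in the context, in real arithmetic) on the maximal tree $\bar\tau=(\tau_1,\dots,\tau_m)$ with an orthonormal starting TTN $Y_{\bar\tau}^0$ of full tree rank and $F(t,Y)=-\nabla\mathrm{E}(Y)$, over a step $t_0<t_1$ with step size $h=t_1-t_0>0$. Let $\widehat{\mathbf{U}}_{\tau_i}$ be the augmented basis matrices and $\widehat C_{\bar\tau}(t)$ the solution of the connection-tensor differential equation in the top-level call, and $\widehat Y_{\bar\tau}(t)=\widehat C_{\bar\tau}(t)\times_{i=1}^m\widehat{\mathbf{U}}_{\tau_i}$. Then the rank-augmented result satisfies $$\mathrm{E}(\widehat Y_{\bar\tau}^1)\le \mathrm{E}(Y_{\bar\tau}^0)-\alpha^2h,\qquad \alpha=\min_{0\le\mu\le1}\Big\|\nabla\mathrm{E}\big(\widehat Y_{\bar\tau}(t_0+\mu h)\big)\times_{i=1}^m\widehat{\mathbf{U}}_{\tau_i}^{\top}\Big\|.$$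
   Context: Tensor notation: for a tensor with modes indexed $0,1,\dots,m$, $\mathrm{mat}_i$ is the mode-$i$ matricization (rows indexed by the $i$th index) and $\mathrm{ten}_i$ its inverse; $A\times_i\mathbf{B}$ is the mode-$i$ product, $\mathrm{mat}_i(A\times_i\mathbf{B})=\mathbf{B}\,\mathrm{mat}_i(A)$; $\times_{i=1}^m$ denotes successive products in modes $1,\dots,m$; ${}^*$ is conjugate transpose (the transpose here, since everything is real); $\|\cdot\|$ and $\langle X,Y\rangle$ are the Euclidean norm and inner product of the vectors of entries. Trees: given a finite leaf set $\mathcal{L}=\{1,\dots,d\}$, each leaf $l$ is a tree with leaf set $\{l\}$; if $\tau_1,\dots,\tau_m$ ($m\ge2$) are trees with pairwise disjoint leaf sets, the ordered tuple $\tau=(\tau_1,\dots,\tau_m)$ is a tree whose leaf set is their union; the $\tau_i$ are its direct subtrees, and subtrees are defined recursively ($\sigma\le\tau$, $\sigma<\tau$ if also $\sigma\ne\tau$). Fix a tree $\bar\tau$ with leaf set $\mathcal{L}$. Tree tensor networks (TTN): given dimensions $n_l$ and ranks $r_\sigma$ ($\sigma\le\bar\tau$, $r_{\bar\tau}=1$), basis matrices $\mathbf{U}_l\in\mathbb{R}^{n_l\times r_l}$ at leaves and connection tensors $C_\tau\in\mathbb{R}^{r_\tau\times r_{\tau_1}\times\dots\times r_{\tau_m}}$ of full multilinear rank at non-leaf subtrees $\tau=(\tau_1,\dots,\tau_m)$, set $X_l=\mathbf{U}_l^\top$, $X_\tau=C_\tau\times_0\mathbf{I}_{r_\tau}\times_{i=1}^m\mathbf{U}_{\tau_i}\in\mathcal{V}_\tau:=\mathbb{R}^{r_\tau\times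 n_{\tau_1}\times\dots\times n_{\tau_m}}$ with $n_\tau=\prod_i n_{\tau_i}$, and $\mathbf{U}_\tau=\mathrm{mat}_0(X_\tau)^\top$; for a leaf, $\mathcal{V}_l:=\mathbb{R}^{r_l\times n_l}$. The TTN is orthonormal if every $\mathbf{U}_\sigma$, $\sigma<\bar\tau$, has orthonormal columns. Full tree rank means all connection tensors have full multilinear rank. $\mathcal{V}_{\bar\tau}$ is identified with $\mathbb{R}^{n_1\times\dots\times n_d}$. Reduced operators and starting values: for a non-leaf $\tau=(\tau_1,\dots,\tau_m)$, a function $F_\tau:[t_0,t_1]\times\mathcal{V}_\tau\to\mathcal{V}_\tau$ and a starting TTN $Y_\tau^0=C_\tau^0\times_0\mathbf{I}_{r_\tau}\times_{i=1}^m\mathbf{U}_{\tau_i}^0$ with $\mathbf{U}_{\tau_i}^0=\mathrm{mat}_0(X_{\tau_i}^0)^\top$, compute QR decompositions $\mathrm{mat}_i(C_\tau^0)^\top=\mathbf{Q}_{\tau_i}^0\mathbf{S}_{\tau_i}^{0,\top}$, let $\mathbf{V}_{\tau_i}^0=\mathrm{mat}_i\big(\mathrm{ten}_i(\mathbf{Q}_{\tau_i}^{0,\top})\times_0\mathbf{I}_{r_\tau}\times_{j\ne i}\mathbf{U}_{\tau_j}^0\big)^\top$, prolongation $\pi_{\tau,i}(Y)=\mathrm{ten}_i\big((\mathbf{V}_{\tau_i}^0\mathrm{mat}_0(Y))^\top\big)$, restriction $\pi_{\tau,i}^\dagger(Z)=\mathrm{ten}_0\big((\mathrm{mat}_i(Z)\mathbf{V}_{\tau_i}^0)^\top\big)$,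 and set $F_{\tau_i}(t,Y)=\pi_{\tau,i}^\dagger(F_\tau(t,\pi_{\tau,i}(Y)))$ and $Y_{\tau_i}^0=X_{\tau_i}^0\times_0\mathbf{S}_{\tau_i}^{0,\top}$. Rank-augmenting TTN integrator on $(\tau,Y_\tau^0,F_\tau,t_0,t_1)$, $\tau$ non-leaf: (1) for each $i$: if $\tau_i=l$ is a leaf, solve $\dot Y_l=F_l(t,Y_l)$, $Y_l(t_0)=Y_l^0$, let $\widehat{\mathbf{U}}_l$ have orthonormal columns spanning the range of $(Y_l(t_1)^\top,\mathbf{U}_l^0)$, and $\widehat{\mathbf{M}}_l=\widehat{\mathbf{U}}_l^*\mathbf{U}_l^0$; otherwise call the integrator recursively on $(\tau_i,Y_{\tau_i}^0,F_{\tau_i},t_0,t_1)$, obtaining $\widehat Y_{\tau_i}^1$ (with root connection tensor $\widehat C_{\tau_i}^1$) and $\widehat C_{\tau_i}^0$, let $\widehat{\mathbf{Q}}_{\tau_i}$ have orthonormal columns spanning the range of $(\mathrm{mat}_0(\widehat C_{\tau_i}^1)^\top,\mathrm{mat}_0(\widehat C_{\tau_i}^0)^\top)$, let $\widehat X_{\tau_i}$ be $\widehat Y_{\tau_i}^1$ with root connection tensor replaced by $\mathrm{ten}_0(\widehat{\mathbf{Q}}_{\tau_i}^\top)$, and set $\widehat{\mathbf{U}}_{\tau_i}=\mathrm{mat}_0(\widehat X_{\tau_i})^\top$, $\widehat{\mathbf{M}}_{\tau_i}=\widehat{\mathbf{U}}_{\tau_i}^*\mathbf{U}_{\tau_i}^0$.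 (2) Set $\widehat C_\tau^0=C_\tau^0\times_{i=1}^m\widehat{\mathbf{M}}_{\tau_i}$, solve $\dot{\widehat C}_\tau(t)=F_\tau\big(t,\widehat C_\tau(t)\times_0\mathbf{I}_{r_\tau}\times_{i=1}^m\widehat{\mathbf{U}}_{\tau_i}\big)\times_{i=1}^m\widehat{\mathbf{U}}_{\tau_i}^*$, $\widehat C_\tau(t_0)=\widehat C_\tau^0$, set $\widehat C_\tau^1=\widehat C_\tau(t_1)$, and return $\widehat Y_\tau^1=\widehat C_\tau^1\times_0\mathbf{I}_{r_\tau}\times_{i=1}^m\widehat{\mathbf{U}}_{\tau_i}$ and $\widehat C_\tau^0$. At the top level, $F_{\bar\tau}=F$ and $Y_{\bar\tau}^0$ is the given starting TTN. All differential equations are assumed to be solved exactly. *)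

From HB Require Import structures.
From mathcomp Require Import all_boot all_order all_algebra.
From mathcomp Require Import all_classical all_reals all_analysis.
From Stdlib Require Lists.List.
Set Implicit Arguments.
Unset Strict Implicit.
Unset Printing Implicit Defensive.
Import Order.TTheory GRing.Theory Num.Theory.
Import numFieldNormedType.Exports.
Local Open Scope ring_scope.
Local Open Scope classical_set_scope.

(* Conventions:
   - a tensor with mode dimensions ds = [d_0; ...; d_m] is a total function
     on multi-indices (seq nat); only in-range indices (J \in mindices ds)
     are meaningful; norms, inner products, equations only look at them.
   - a matrix with a rows and b columns is a total function nat -> nat -> R,
     only the entries (i, j) with i < a, j < b being meaningful.
   - matricization columns / flattened mode indices use the mixed-radix
     (row-major) bijection [unflat]/[flat]. *)

Section TTNDefs.
Variable R : realType.

Definition tens := seq nat -> R.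
Definition mat := nat -> nat -> R.

Definition prodn (ds : seq nat) : nat := foldr muln 1%N ds.

Fixpoint unflat (ds : seq nat) (k : nat) : seq nat :=
  match ds with
  | [::] => [::]
  | d :: ds' => (k %/ prodn ds')%N :: unflat ds' (k %% prodn ds')%N
  end.

Fixpoint flat (ds : seq nat) (J : seq nat) : nat :=
  match ds, J with
  | d :: ds', j :: J' => (j * prodn ds' + flat ds' J')%N
  | _, _ => 0%N
  end.

Definition rem_at (i : nat) (s : seq nat) : seq nat := take i s ++ drop i.+1 s.
Definition ins_at (i : nat) (x : nat) (s : seq nat) : seq nat :=
  take i s ++ x :: drop i s.

Fixpoint mindices (ds : seq nat) : seq (seq nat) :=
  match ds with
  | [::] => [:: [::]]
  | d :: ds' => [seq j :: J | j <- iota 0 d, J <- mindices ds']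
  end.

Definition addT (X Y : tens) : tens := fun J => X J + Y J.
Definition subT (X Y : tens) : tens := fun J => X J - Y J.
Definition innerT (ds : seq nat) (X Y : tens) : R :=
  \sum_(J <- mindices ds) X J * Y J.
Definition normT (ds : seq nat) (X : tens) : R := Num.sqrt (innerT ds X X).

(* mode-i matricization (rows: i-th index) of a tensor with dims ds *)
Definition matz (ds : seq nat) (i : nat) (A : tens) : mat :=
  fun a b => A (ins_at i a (unflat (rem_at i ds) b)).
(* its inverse: ten_i, producing a tensor with dims ds *)
Definition tenz (ds : seq nat) (i : nat) (M : mat) : tens :=
  fun J => M (nth 0%N J i) (flat (rem_at i ds) (rem_at i J)).

(* mode-i product A x_i B, where the old i-th dimension of A is dold *)
Definition mprod (i dold : nat) (B : mat) (A : tens) : tens :=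
  fun J => \sum_(k < dold) B (nth 0%N J i) k * A (set_nth 0%N J i k).

Fixpoint mprods_from (i : nat) (Bs : seq (mat * nat)) (A : tens) : tens :=
  match Bs with
  | [::] => A
  | (B, dold) :: Bs' => mprods_from i.+1 Bs' (mprod i dold B A)
  end.

Definition mulm (k : nat) (A B : mat) : mat :=
  fun a b => \sum_(l < k) A a l * B l b.
Definition trm (A : mat) : mat := fun a b => A b a.
Definition idm : mat := fun a b => (a == b)%:R.

Definition mx (a b : nat) (M : mat) : 'M[R]_(a, b) := \matrix_(i < a, j < b) M i j.

Definition orthocols (m c : nat) (U : mat) : Prop :=
  (mx m c U)^T *m mx m c U = 1%:M.

(* the range of U (m x c) equals the range of the block matrix (A, B),
   A : m x k1, B : m x k2 *)
Definition spans_cat (m c : nat) (U : mat) (k1 : nat) (A : mat) (k2 : nat) (B : mat)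
  : bool :=
  ((mx m c U)^T == col_mx (mx m k1 A)^T (mx m k2 B)^T)%MS.

Definition fullmlrank (ds : seq nat) (C : tens) : Prop :=
  forall k, (k < size ds)%N ->
    \rank (mx (nth 0%N ds k) (prodn (rem_at k ds)) (matz ds k C)) = nth 0%N ds k.

Definition ode_sol (ds : seq nat) (F : R -> tens -> tens) (t0 t1 : R)
  (Y0 : tens) (Y : R -> tens) : Prop :=
  forall J, J \in mindices ds ->
    Y t0 J = Y0 J /\
    {within `[t0, t1], continuous (fun t => Y t J)} /\
    (forall t, t0 < t < t1 -> is_derive t 1 (fun s => Y s J) (F t (Y t) J)).

Definition C1_with_gradient (ds : seq nat) (E : tens -> R) (gradE : tens -> tens)
  : Prop :=
  (forall X Y, (forall J, J \in mindices ds -> X J = Y J) -> E X = E Y) /\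
  (forall X (eps : R), 0 < eps -> exists2 delta : R, 0 < delta &
     forall H, normT ds H < delta ->
       `|E (addT X H) - E X - innerT ds (gradE X) H| <= eps * normT ds H) /\
  (forall X (eps : R), 0 < eps -> exists2 delta : R, 0 < delta &
     forall H, normT ds H < delta ->
       normT ds (subT (gradE (addT X H)) (gradE X)) < eps).

(* TLeaf l r U : leaf l with basis matrix U (n_l x r);
   TNode r C cs : subtree (cs_1, ..., cs_m) with rank r and connection
   tensor C of dims [r; rank cs_1; ...; rank cs_m]. *)
Inductive ttn :=
| TLeaf of nat & nat & mat
| TNode of nat & tens & seq ttn.

Definition rank (t : ttn) : nat :=
  match t with TLeaf _ r _ => r | TNode r _ _ => r end.

Definition dflt : ttn := TLeaf 0 0 (fun _ _ => 0).

Fixpoint leaves (t : ttn) : seq nat :=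
  match t with
  | TLeaf l _ _ => [:: l]
  | TNode _ _ cs => flatten [seq leaves c | c <- cs]
  end.

Fixpoint wf_tree (t : ttn) : bool :=
  match t with
  | TLeaf _ _ _ => true
  | TNode _ _ cs => (1 < size cs)%N && all wf_tree cs
  end.

Fixpoint subtrees (t : ttn) : seq ttn :=
  t :: match t with
       | TLeaf _ _ _ => [::]
       | TNode _ _ cs => flatten [seq subtrees c | c <- cs]
       end.

Variable n : nat -> nat.

Fixpoint nT (t : ttn) : nat :=
  match t with
  | TLeaf l _ _ => n l
  | TNode _ _ cs =>
      (fix pr (cs : seq ttn) : nat :=
         match cs with [::] => 1%N | c :: cs' => (nT c * pr cs')%N end) cs
  end.

(* U_tau = mat_0(X_tau)^T *)
Fixpoint basis (t : ttn) : mat :=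
  match t with
  | TLeaf _ _ U => U
  | TNode _ C cs => fun a b =>
      mprods_from 1 [seq (basis c, rank c) | c <- cs] C
                  (b :: unflat [seq nT c | c <- cs] a)
  end.

Definition xt (t : ttn) : tens :=
  match t with
  | TLeaf _ _ U => fun J => U (nth 0%N J 1) (nth 0%N J 0)
  | TNode _ C cs => mprods_from 1 [seq (basis c, rank c) | c <- cs] C
  end.

Definition vdims (t : ttn) : seq nat :=
  match t with
  | TLeaf l r _ => [:: r; n l]
  | TNode r _ cs => r :: [seq nT c | c <- cs]
  end.

Definition node_fullrank (t : ttn) : Prop :=
  match t with
  | TLeaf _ _ _ => True
  | TNode r C cs => fullmlrank (r :: [seq rank c | c <- cs]) C
  end.

Definition ortho_ttn (t : ttn) : Prop :=
  forall s, List.In s (behead (subtrees t)) -> orthocols (nT s) (rank s) (basis s).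

Definition fullrank_ttn (t : ttn) : Prop :=
  forall s, List.In s (subtrees t) -> node_fullrank s.

(* V^0_{tau_i} for tau = (r, C0, cs), child i (mode i+1), from Q = Q^0_{tau_i} *)
Definition Vmat (r : nat) (cs : seq ttn) (i : nat) (Q : mat) : mat :=
  let D := r :: [seq rank c | c <- cs] in
  let Bs := [seq ((if j == i then idm else basis (nth dflt cs j)),
                  rank (nth dflt cs j)) | j <- iota 0 (size cs)] in
  let D' := r :: [seq (if j == i then rank (nth dflt cs j) else nT (nth dflt cs j))
                 | j <- iota 0 (size cs)] in
  trm (matz D' i.+1 (mprods_from 1 Bs (tenz D i.+1 (trm Q)))).

Definition pdim (r : nat) (cs : seq ttn) (i : nat) : nat :=
  prodn (rem_at i.+1 (r :: [seq nT c | c <- cs])).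

Definition prol (r : nat) (cs : seq ttn) (i : nat) (Q : mat) (Y : tens) : tens :=
  let c := nth dflt cs i in
  tenz (r :: [seq nT c | c <- cs]) i.+1
       (trm (mulm (rank c) (Vmat r cs i Q) (matz (vdims c) 0 Y))).

Definition restr (r : nat) (cs : seq ttn) (i : nat) (Q : mat) (Z : tens) : tens :=
  let c := nth dflt cs i in
  tenz (vdims c) 0
       (trm (mulm (pdim r cs i) (matz (r :: [seq nT c | c <- cs]) i.+1 Z)
                  (Vmat r cs i Q))).

Definition Fsub (r : nat) (cs : seq ttn) (i : nat) (Q : mat)
  (F : R -> tens -> tens) : R -> tens -> tens :=
  fun t Y => restr r cs i Q (F t (prol r cs i Q Y)).

Definition Mhat (c xh : ttn) : mat := mulm (nT c) (trm (basis xh)) (basis c).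

Definition chat0 (C0 : tens) (cs Xhs : seq ttn) : tens :=
  mprods_from 1 [seq (Mhat (nth dflt cs j) (nth dflt Xhs j), rank (nth dflt cs j))
                | j <- iota 0 (size cs)] C0.

Definition expand (Xhs : seq ttn) (C : tens) : tens :=
  mprods_from 1 [seq (basis x, rank x) | x <- Xhs] C.
Definition project (Xhs : seq ttn) (Z : tens) : tens :=
  mprods_from 1 [seq (trm (basis x), nT x) | x <- Xhs] Z.

(* Step at a non-leaf tau = (r, C0, cs) with reduced function F, given the
   choices: QR factors Q i, S i, processed children Xhs (the X-hat_{tau_i},
   whose bases are the Uhat_{tau_i}), and the solution Chat of the
   connection-tensor ODE.  CR is the child-processing relation. *)
Definition NodeStep
  (CR : ttn -> mat -> (R -> tens -> tens) -> R -> R -> ttn -> Prop)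
  (r : nat) (C0 : tens) (cs : seq ttn) (F : R -> tens -> tens) (t0 t1 : R)
  (Q S : nat -> mat) (Xhs : seq ttn) (Chat : R -> tens) : Prop :=
  size Xhs = size cs /\
  (forall i, (i < size cs)%N ->
     orthocols (prodn (rem_at i.+1 (r :: [seq rank c | c <- cs])))
               (rank (nth dflt cs i)) (Q i) /\
     (forall a b, (a < b < rank (nth dflt cs i))%N -> S i a b = 0) /\
     mx (prodn (rem_at i.+1 (r :: [seq rank c | c <- cs]))) (rank (nth dflt cs i))
        (trm (matz (r :: [seq rank c | c <- cs]) i.+1 C0)) =
     mx (prodn (rem_at i.+1 (r :: [seq rank c | c <- cs]))) (rank (nth dflt cs i)) (Q i)
       *m (mx (rank (nth dflt cs i)) (rank (nth dflt cs i)) (S i))^T /\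
     CR (nth dflt cs i) (S i) (Fsub r cs i (Q i) F) t0 t1 (nth dflt Xhs i)) /\
  ode_sol (r :: [seq rank x | x <- Xhs])
          (fun t C => project Xhs (F t (expand Xhs C))) t0 t1
          (chat0 C0 cs Xhs) Chat.

(* Run Y0 F t0 t1 Yhat1 Chat0 : the integrator on (tau, Y0, F, t0, t1) may
   return (Yhat1, Chat0).
   ChildRun X0 S F t0 t1 Xhat : processing of a direct subtree with starting
   X^0_{tau_i} = X0, S = S^0_{tau_i}, reduced function F = F_{tau_i}, yields
   X-hat_{tau_i} = Xhat (for a leaf, X-hat is the leaf with basis Uhat_l). *)
Inductive Run : ttn -> (R -> tens -> tens) -> R -> R -> ttn -> tens -> Prop :=
| RunNode r C0 cs F t0 t1 Q S Xhs Chat :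
    NodeStep ChildRun r C0 cs F t0 t1 Q S Xhs Chat ->
    Run (TNode r C0 cs) F t0 t1 (TNode r (Chat t1) Xhs) (chat0 C0 cs Xhs)
with ChildRun : ttn -> mat -> (R -> tens -> tens) -> R -> R -> ttn -> Prop :=
| ChildLeaf l r U0 S F t0 t1 (Y : R -> tens) c Uh :
    ode_sol [:: r; n l] F t0 t1 (mprod 0 r (trm S) (xt (TLeaf l r U0))) Y ->
    orthocols (n l) c Uh ->
    spans_cat (n l) c Uh r (fun a b => Y t1 [:: b; a]) r U0 ->
    ChildRun (TLeaf l r U0) S F t0 t1 (TLeaf l c Uh)
| ChildNode r C cs S F t0 t1 C1 cs' Ch0 c Qh :
    Run (TNode r (mprod 0 r (trm S) C) cs) F t0 t1 (TNode r C1 cs') Ch0 ->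
    orthocols (prodn [seq rank x | x <- cs']) c Qh ->
    spans_cat (prodn [seq rank x | x <- cs']) c Qh
              r (trm (matz (r :: [seq rank x | x <- cs']) 0 C1))
              r (trm (matz (r :: [seq rank x | x <- cs']) 0 Ch0)) ->
    ChildRun (TNode r C cs) S F t0 t1
             (TNode c (tenz (c :: [seq rank x | x <- cs']) 0 (trm Qh)) cs').

End TTNDefs.

(* The augmented bases U^_(tau_i) have orthonormal columns and their ranges
   contain those of the old bases U^0_(tau_i): at a leaf this is the
   augmentation step itself, at an inner node it follows by induction over the
   tree, full tree rank making the triangular QR factors S^0 invertible.
   Hence U^ U^T U^0 = U^0, so the Galerkin curve
   Y^(t) = C^(t) x_i U^_(tau_i) starts at Y^0.  By the chain rule and the
   adjointness of x_i U^ and x_i U^T, the energy decreases along it at rate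
   d/dt E(Y^(t)) = - |grad E(Y^(t)) x_i U^T|^2 <= - alpha^2, and the mean
   value theorem gives the claim. *)

From Pilot Require Import Defs.
From HB Require Import structures.
From mathcomp Require Import all_boot all_order all_algebra.
From mathcomp Require Import all_classical all_reals all_analysis.
From mathcomp Require Import ring lra.
Import Order.TTheory GRing.Theory Num.Theory.
Import numFieldNormedType.Exports.
Local Open Scope ring_scope.
Set Implicit Arguments.
Unset Strict Implicit.
Unset Printing Implicit Defensive.

Section MultiIndices.
Variable R : comPzRingType.

Lemma size_unflat ds k : size (unflat ds k) = size ds.
Proof. by elim: ds k => //= d ds IH k; rewrite IH. Qed.

Lemma mem_mindices_cons d ds j J :
  (j :: J \in mindices (d :: ds)) = (j < d)%N && (J \in mindices ds).
Proof.
apply/allpairsP/andP => [[[x y] /= [hx hy [-> ->]]]|[hj hJ]].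
  by rewrite mem_iota in hx.
by exists (j, J); rewrite /= mem_iota.
Qed.

Lemma mindices_cons_inv d ds J : J \in mindices (d :: ds) ->
  exists j J', J = j :: J'.
Proof. by case/allpairsP => -[x y] [_ _ ->]; exists x, y. Qed.

Lemma mindices_unflat ds : mindices ds = map (unflat ds) (iota 0 (prodn ds)).
Proof.
elim: ds => [|d ds IH] //=; rewrite IH; set p := prodn ds.
have [->|p_gt0] := posnP p; first by rewrite muln0 /=; elim: (iota 0 d).
elim: d => [|d IHd] //.
rewrite -addn1 iotaD allpairs_cat IHd mulnDl mul1n iotaD map_cat add0n /= cats0.
congr (_ ++ _).
have -> : iota (d * p) p = map (addn (d * p)) (iota 0 p) by rewrite -iotaDl addn0.
rewrite -!map_comp.
apply/eq_in_map => k; rewrite mem_iota add0n => /andP[_ hk] /=.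
by rewrite divnMDl // divn_small // addn0 modnMDl modn_small.
Qed.

Lemma flat_unflat ds k : (k < prodn ds)%N -> flat ds (unflat ds k) = k.
Proof.
elim: ds k => [|d ds IH] k /=; first by case: k.
move=> hk; have p_gt0 : (0 < prodn ds)%N.
  by move: hk; case: (prodn ds) => //; rewrite muln0.
by rewrite IH ?ltn_pmod // -divn_eq.
Qed.

Lemma unflat_flat ds K : K \in mindices ds ->
  unflat ds (flat ds K) = K /\ (flat ds K < prodn ds)%N.
Proof.
rewrite mindices_unflat => /mapP [k]; rewrite mem_iota add0n => /andP[_ hk] ->.
by rewrite flat_unflat.
Qed.

Lemma uniq_mindices ds : uniq (mindices ds).
Proof.
rewrite mindices_unflat map_inj_in_uniq ?iota_uniq // => x y.
rewrite !mem_iota !add0n => /andP[_ hx] /andP[_ hy] e.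
by rewrite -[x](flat_unflat hx) -[y](flat_unflat hy) e.
Qed.

Lemma unflat_mindices ds k : (k < prodn ds)%N -> unflat ds k \in mindices ds.
Proof. by move=> hk; rewrite mindices_unflat map_f // mem_iota. Qed.

Lemma size_mindices ds J : J \in mindices ds -> size J = size ds.
Proof. by rewrite mindices_unflat => /mapP [k _ ->]; apply: size_unflat. Qed.

Lemma nth_mindices ds K j : K \in mindices ds -> (j < size ds)%N ->
  (nth 0%N K j < nth 0%N ds j)%N.
Proof.
elim: ds K j => [|d ds IH] K j // hK.
have [x [K' eK]] := mindices_cons_inv hK; subst K.
rewrite mem_mindices_cons in hK; case/andP: hK => hx hK'.
by case: j => [|j] //= hj; apply: IH.
Qed.

Lemma big_ord_iota d (G : nat -> R) :
  \sum_(k < d) G k = \sum_(j <- iota 0 d) G j.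
Proof. by rewrite -(subn0 d) -/(index_iota 0 d) big_mkord subn0. Qed.

Lemma sum_mindices_cons d ds (G : seq nat -> R) :
  \sum_(J <- mindices (d :: ds)) G J =
  \sum_(j <- iota 0 d) \sum_(K <- mindices ds) G (j :: K).
Proof. by rewrite big_allpairs_dep. Qed.

Lemma sum_unflat ds (G : seq nat -> R) :
  \sum_(k < prodn ds) G (unflat ds k) = \sum_(K <- mindices ds) G K.
Proof. by rewrite mindices_unflat big_map (big_ord_iota _ (G \o unflat ds)). Qed.

Lemma sum_flat ds (G : nat -> R) :
  \sum_(K <- mindices ds) G (flat ds K) = \sum_(k < prodn ds) G k.
Proof.
rewrite mindices_unflat big_map big_ord_iota; apply: eq_big_seq => k.
by rewrite mem_iota add0n => /andP[_ hk]; rewrite flat_unflat.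
Qed.

Lemma sum_delta (s : seq (seq nat)) x (G : seq nat -> R) : uniq s -> x \in s ->
  \sum_(y <- s) (x == y)%:R * G y = G x.
Proof.
move=> us xs; rewrite (bigD1_seq x) //= eqxx mul1r big1_seq ?addr0 //.
by move=> y /andP[hy _]; rewrite eq_sym (negbTE hy) mul0r.
Qed.

Lemma sum_prod_mindices ds (f : nat -> nat -> R) :
  \sum_(K <- mindices ds) \prod_(j < size ds) f j (nth 0%N K j) =
  \prod_(j < size ds) \sum_(k < nth 0%N ds j) f j k.
Proof.
elim: ds f => [|d ds IH] f /=; first by rewrite big_seq1 !big_ord0.
rewrite big_allpairs_dep big_ord_recl /= big_ord_iota big_distrl /=.
apply: eq_bigr => j _; rewrite -(IH (fun j => f j.+1)) big_distrr /=.
by apply: eq_bigr => K _; rewrite big_ord_recl.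
Qed.

End MultiIndices.

Section KroneckerSums.
Variable R : realType.

Definition kprod (m : nat) (f : nat -> mat R) (I K : seq nat) : R :=
  \prod_(j < m) f j (nth 0%N I j) (nth 0%N K j).

Lemma set_nth_cat (s t : seq nat) i y k : size s = i ->
  set_nth 0%N (s ++ y :: t) i k = s ++ k :: t.
Proof. by move<-; elim: s => //= x s ->. Qed.

Lemma mprods_fromE Bs i A J : size J = (i + size Bs)%N ->
  mprods_from i Bs A J =
  \sum_(K <- mindices (map snd Bs))
     kprod (size Bs) (fun j => (nth (idm R, 0%N) Bs j).1) (drop i J) K *
     A (take i J ++ K).
Proof.
elim: Bs i A J => [|[B d] Bs IH] i A J hJ /=.
  by rewrite big_seq1 /kprod big_ord0 mul1r cats0 take_oversize // hJ addn0.
rewrite IH; last by rewrite hJ addSnnS.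
have hi : (i < size J)%N by rewrite hJ -addSnnS leq_addr.
have hs : size (take i J) = i by rewrite size_take hi.
rewrite big_allpairs_dep /= exchange_big /=; apply: eq_bigr => K _.
rewrite (take_nth 0%N hi) cat_rcons /mprod nth_cat hs ltnn subnn /=.
rewrite -big_ord_iota big_distrr /=; apply: eq_bigr => j _.
rewrite set_nth_cat // /kprod big_ord_recl /= nth_drop addn0.
rewrite -mulrA [LHS]mulrCA; congr (_ * (_ * _)).
by apply: eq_bigr => k _; rewrite !nth_drop /bump /= add1n addnS addSn.
Qed.

Lemma mprods_from1E Bs A b I : size I = size Bs ->
  mprods_from 1 Bs A (b :: I) =
  \sum_(K <- mindices (map snd Bs))
     kprod (size Bs) (fun j => (nth (idm R, 0%N) Bs j).1) I K * A (b :: K).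
Proof. by move=> hI; rewrite mprods_fromE /= ?hI // drop0 take0. Qed.

Lemma kprod_map (T : Type) (x0 : T) (s : seq T) (g : T -> mat R) (h : T -> nat) I K :
  kprod (size [seq (g x, h x) | x <- s])
        (fun j => (nth (idm R, 0%N) [seq (g x, h x) | x <- s] j).1) I K =
  kprod (size s) (fun j => g (nth x0 s j)) I K.
Proof. by rewrite /kprod size_map; apply: eq_bigr => j _; rewrite (nth_map x0). Qed.

Lemma kprod_mul ds (f g : nat -> mat R) I L :
  \sum_(K <- mindices ds) kprod (size ds) f I K * kprod (size ds) g K L =
  kprod (size ds) (fun j => mulm (nth 0%N ds j) (f j) (g j)) I L.
Proof.
rewrite /kprod; under eq_bigr => K _ do rewrite -big_split /=.
exact: (sum_prod_mindices ds (fun j k => f j (nth 0%N I j) k * g j k (nth 0%N L j))).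
Qed.

Lemma kprod_idm ds K K' : K \in mindices ds -> K' \in mindices ds ->
  kprod (size ds) (fun=> idm R) K K' = (K == K')%:R.
Proof.
move=> hK hK'; rewrite /kprod /idm.
case: eqP => [->|neK]; first by apply: big1 => j _; rewrite eqxx.
case: (pickP (fun j : 'I_(size ds) => nth 0%N K j != nth 0%N K' j)) => [j hj|same].
  by rewrite (bigD1 j) //= (negbTE hj) mul0r.
case: neK; apply: (@eq_from_nth _ 0%N).
  by rewrite (size_mindices hK) (size_mindices hK').
move=> i; rewrite (size_mindices hK) => hi.
by have /negbFE/eqP := same (Ordinal hi).
Qed.

Lemma mprods_from_opp i Bs (A : tens R) :
  mprods_from i Bs (fun J => - A J) = fun J => - mprods_from i Bs A J.
Proof.
elim: Bs i A => [|[B d] Bs IH] i A //=; rewrite -IH; congr mprods_from.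
by apply/funext => J; rewrite /mprod -sumrN; apply: eq_bigr => k _; rewrite mulrN.
Qed.

End KroneckerSums.

Section NodeExpansions.
Variable R : realType.
Variable n : nat -> nat.
Local Notation ttn := (ttn R).
Local Notation dflt := (dflt R).
Local Notation basis := (@Defs.basis R n).
Local Notation nT := (@Defs.nT R n).
Local Notation expand := (@Defs.expand R n).
Local Notation project := (@Defs.project R n).

Lemma nT_node r C cs : nT (TNode r C cs) = prodn [seq nT c | c <- cs].
Proof. by elim: cs => //= c cs ->. Qed.

Lemma expandE Xs C b I : size I = size Xs ->
  expand Xs C (b :: I) =
  \sum_(K <- mindices [seq rank x | x <- Xs])
     kprod (size Xs) (fun j => basis (nth dflt Xs j)) I K * C (b :: K).
Proof.
move=> hI; rewrite /Defs.expand mprods_from1E -?map_comp; last by rewrite size_map.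
by apply: eq_bigr => K _; rewrite (kprod_map dflt).
Qed.

Lemma basis_node r C cs a b :
  basis (TNode r C cs) a b = expand cs C (b :: unflat [seq nT c | c <- cs] a).
Proof. by []. Qed.

Lemma projectE Xs Z b I : size I = size Xs ->
  project Xs Z (b :: I) =
  \sum_(A <- mindices [seq nT x | x <- Xs])
     kprod (size Xs) (fun j => trm (basis (nth dflt Xs j))) I A * Z (b :: A).
Proof.
move=> hI; rewrite /Defs.project mprods_from1E -?map_comp; last by rewrite size_map.
by apply: eq_bigr => K _; rewrite (kprod_map dflt).
Qed.

Lemma chat0E C0 cs Xs b I : size I = size cs ->
  chat0 n C0 cs Xs (b :: I) =
  \sum_(L <- mindices [seq rank c | c <- cs])
     kprod (size cs) (fun j => Mhat n (nth dflt cs j) (nth dflt Xs j)) I L * C0 (b :: L).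
Proof.
move=> hI; rewrite /chat0 mprods_from1E; last by rewrite size_map size_iota.
rewrite -map_comp (map_comp (fun c => rank c)) map_nth_iota0 // take_size.
apply: eq_bigr => K _; rewrite (kprod_map 0%N) size_iota.
by congr (_ * _); apply: eq_bigr => j _; rewrite nth_iota.
Qed.

End NodeExpansions.

Section Orthonormality.
Variable R : realType.
Variable n : nat -> nat.
Local Notation ttn := (ttn R).
Local Notation dflt := (dflt R).
Local Notation basis := (@Defs.basis R n).
Local Notation nT := (@Defs.nT R n).

Lemma orthocolsE m c (U : mat R) : orthocols m c U ->
  forall k k', (k < c)%N -> (k' < c)%N -> \sum_(a < m) U a k * U a k' = (k == k')%:R.
Proof.
move=> /matrixP hU k k' hk hk'; have := hU (Ordinal hk) (Ordinal hk').
by rewrite !mxE => <-; apply: eq_bigr => a _; rewrite !mxE.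
Qed.

Definition children_orthocols (Xs : seq ttn) : Prop :=
  forall j, (j < size Xs)%N ->
    orthocols (nT (nth dflt Xs j)) (rank (nth dflt Xs j)) (basis (nth dflt Xs j)).

Lemma kprod_orthocols Xs K K' : children_orthocols Xs ->
  K \in mindices [seq rank x | x <- Xs] -> K' \in mindices [seq rank x | x <- Xs] ->
  \sum_(A <- mindices [seq nT x | x <- Xs])
     kprod (size Xs) (fun j => basis (nth dflt Xs j)) A K *
     kprod (size Xs) (fun j => basis (nth dflt Xs j)) A K' = (K == K')%:R.
Proof.
move=> hXs hK hK'; have sz : size [seq nT x | x <- Xs] = size Xs by rewrite size_map.
rewrite -(kprod_idm R hK hK') -{1 2}sz.
rewrite (kprod_mul _ (fun j => trm (basis (nth dflt Xs j)))) /kprod !size_map.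
apply: eq_bigr => j _; have hj : (j < size Xs)%N by [].
rewrite /mulm /trm (nth_map dflt) // (orthocolsE (hXs _ hj)) //.
  by rewrite -(nth_map dflt 0%N (fun x => rank x)) // nth_mindices ?size_map.
by rewrite -(nth_map dflt 0%N (fun x => rank x)) // nth_mindices ?size_map.
Qed.

(* [ten_0(Q^T)], the root connection tensor of an augmented inner child. *)
Definition qtensor (c : nat) (Xs : seq ttn) (Qh : mat R) : tens R :=
  tenz (c :: [seq rank x | x <- Xs]) 0 (trm Qh).

Lemma qtensorE c Xs Qh b K :
  qtensor c Xs Qh ((b : nat) :: K) = Qh (flat [seq rank x | x <- Xs] K) b.
Proof. by rewrite /qtensor /tenz /rem_at /= !drop0. Qed.

Lemma orthocols_node Xs c (Qh : mat R) : children_orthocols Xs ->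
  orthocols (prodn [seq rank x | x <- Xs]) c Qh ->
  orthocols (nT (TNode c (qtensor c Xs Qh) Xs)) c (basis (TNode c (qtensor c Xs Qh) Xs)).
Proof.
move=> hXs hQ; apply/matrixP => b b'; rewrite !mxE nT_node.
set ranks := [seq rank x | x <- Xs].
pose U A K := kprod (size Xs) (fun j => basis (nth dflt Xs j)) A K.
under eq_bigr => a _ do rewrite !mxE !basis_node !expandE ?size_unflat ?size_map //.
rewrite (sum_unflat _ (fun A =>
  (\sum_(K <- mindices ranks) U A K * qtensor c Xs Qh ((b : nat) :: K)) *
   \sum_(K <- mindices ranks) U A K * qtensor c Xs Qh ((b' : nat) :: K))).
transitivity (\sum_(K <- mindices ranks) \sum_(K' <- mindices ranks)
    (K == K')%:R * (Qh (flat ranks K) b * Qh (flat ranks K') b')).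
  under eq_bigr => A _ do rewrite big_distrl /=.
  rewrite exchange_big /=; apply: eq_big_seq => K hK.
  under eq_bigr => A _ do rewrite big_distrr /=.
  rewrite exchange_big /=; apply: eq_big_seq => K' hK'.
  rewrite !qtensorE -(kprod_orthocols hXs hK hK') big_distrl /=.
  by apply: eq_bigr => A _; rewrite /U; ring.
rewrite (eq_big_seq (fun K => Qh (flat ranks K) b * Qh (flat ranks K) b')); last first.
  by move=> K hK; rewrite (sum_delta (fun K' => _ * Qh (flat ranks K') b')) ?uniq_mindices.
by rewrite (sum_flat ranks (fun k => Qh k b * Qh k b')) (orthocolsE hQ).
Qed.

End Orthonormality.

Lemma row_free_of_annihilators (F : fieldType) m p (A A' : 'M[F]_(m, p)) :
  row_free A -> (forall v : 'rV_m, v *m A' = 0 -> v *m A = 0) -> row_free A'.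
Proof.
move=> fA hA; rewrite -kermx_eq0 -submx0; apply/rV_subP => v /sub_kermxP hv.
by move: (hA v hv); rewrite -(mul0mx _ A) => /(row_free_inj fA) ->; apply: sub0mx.
Qed.

Section FullRank.
Variable R : realType.

Lemma qr_factor_unit m k (M Q S : mat R) : \rank (mx k m M) = k ->
  mx m k (trm M) = mx m k Q *m (mx k k S)^T -> mx k k S \in unitmx.
Proof.
move=> hr hqr; rewrite -row_free_unit /row_free eqn_leq rank_leq_row /=.
rewrite -{1}hr -mxrank_tr.
have -> : (mx k m M)^T = mx m k (trm M) by apply/matrixP => i j; rewrite !mxE.
by rewrite hqr (leq_trans (mxrankM_maxr _ _)) // mxrank_tr.
Qed.

Definition mode_comb r i ri (v : 'rV[R]_ri) (X : tens R) (L : seq nat) : 'rV[R]_r :=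
  \row_(k < r) \sum_(a < ri) v 0 a * X ((k : nat) :: ins_at i a L).

Lemma mode_comb_mprod0 r i ri (v : 'rV[R]_ri) (X : tens R) (S : mat R) L :
  mode_comb r i v (mprod 0 r (trm S) X) L = mode_comb r i v X L *m mx r r S.
Proof.
apply/rowP => k; rewrite !mxE.
under [RHS]eq_bigr => k' _ do rewrite !mxE big_distrl /=.
rewrite exchange_big /=; apply: eq_bigr => a _; rewrite /mprod big_distrr /=.
by apply: eq_bigr => k' _ /=; rewrite /trm; ring.
Qed.

Lemma rank_matz_mprod0 r ds i (C : tens R) (S : mat R) :
  mx r r S \in unitmx ->
  \rank (mx (nth 0%N ds i) (prodn (rem_at i.+1 (r :: ds))) (matz (r :: ds) i.+1 C))
    = nth 0%N ds i ->
  \rank (mx (nth 0%N ds i) (prodn (rem_at i.+1 (r :: ds)))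
           (matz (r :: ds) i.+1 (mprod 0 r (trm S) C))) = nth 0%N ds i.
Proof.
move=> hS /eqP fA; apply/eqP; apply: (row_free_of_annihilators fA) => v hv.
set D := rem_at i ds; set p := prodn D.
have comb0 L : L \in mindices D -> mode_comb r i v C L = 0.
  move=> hL; have uS : row_free (mx r r S) by rewrite row_free_unit.
  apply: (row_free_inj uS); rewrite mul0mx -mode_comb_mprod0; apply/rowP => k.
  have hkL : (k : nat) :: L \in mindices (r :: D) by rewrite mem_mindices_cons ltn_ord.
  have [ekL ltkL] := unflat_flat hkL.
  have := congr1 (fun M : 'M[R]_(1, prodn (r :: D)) => M 0 (Ordinal ltkL)) hv.
  rewrite !mxE => e; rewrite -[RHS]e; apply: eq_bigr => a _; rewrite !mxE /matz.
  by change (rem_at i.+1 (r :: ds)) with (r :: D); rewrite ekL.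
apply/rowP => b; have hb : (b < r * p)%N := ltn_ord b.
have p_gt0 : (0 < p)%N by rewrite lt0n; apply: contraTneq hb => ->; rewrite muln0.
have hk : (b %/ p < r)%N by rewrite ltn_divLR.
have /rowP /(_ (Ordinal hk)) := comb0 _ (unflat_mindices (ltn_pmod b p_gt0)).
by rewrite !mxE => e; rewrite -[RHS]e; apply: eq_bigr => a _; rewrite !mxE.
Qed.

End FullRank.

Section Augmentation.
Variable R : realType.
Variable n : nat -> nat.
Local Notation ttn := (ttn R).
Local Notation dflt := (dflt R).
Local Notation basis := (@Defs.basis R n).
Local Notation nT := (@Defs.nT R n).
Local Notation expand := (@Defs.expand R n).

Definition augments (c xh : ttn) : Prop :=
  [/\ nT xh = nT c, orthocols (nT c) (rank xh) (basis xh) &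
      exists X : 'M[R]_(rank xh, rank c),
        mx (nT c) (rank c) (basis c) = mx (nT c) (rank xh) (basis xh) *m X].

Definition augments_all (cs Xs : seq ttn) : Prop :=
  size Xs = size cs /\
  forall j, (j < size cs)%N -> augments (nth dflt cs j) (nth dflt Xs j).

Lemma augments_proj c xh : augments c xh ->
  forall a b, (a < nT c)%N -> (b < rank c)%N ->
  mulm (rank xh) (basis xh) (Mhat n c xh) a b = basis c a b.
Proof.
case=> _ ho [X hX] a b ha hb; set W := mx (nT c) (rank xh) (basis xh).
have WWU : W *m (W^T *m mx (nT c) (rank c) (basis c)) = mx (nT c) (rank c) (basis c).
  by rewrite hX (mulmxA W^T) ho mul1mx.
have := congr1 (fun M : 'M[R]_(nT c, rank c) => M (Ordinal ha) (Ordinal hb)) WWU.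
rewrite [RHS]mxE mxE => <-; apply: eq_bigr => k _.
by rewrite !mxE /Mhat /mulm; congr (_ * _); apply: eq_bigr => l _; rewrite !mxE.
Qed.

Lemma augments_nT cs Xs : augments_all cs Xs ->
  [seq nT x | x <- Xs] = [seq nT c | c <- cs].
Proof.
case=> sz hXs; apply: (@eq_from_nth _ 0%N); first by rewrite !size_map sz.
move=> i; rewrite size_map sz => hi.
by rewrite !(nth_map dflt) ?sz //; case: (hXs i hi).
Qed.

Lemma augments_orthocols cs Xs : augments_all cs Xs -> children_orthocols n Xs.
Proof. by case=> sz hXs j; rewrite sz => /hXs [-> ho _]. Qed.

Lemma expand_chat0 C0 cs Xs b A : augments_all cs Xs ->
  A \in mindices [seq nT c | c <- cs] ->
  expand Xs (chat0 n C0 cs Xs) (b :: A) = expand cs C0 (b :: A).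
Proof.
move=> [sz hXs] hA; have sA : size A = size cs by rewrite (size_mindices hA) size_map.
rewrite expandE ?sz // expandE //.
set ranksX := [seq rank x | x <- Xs]; set ranks := [seq rank c | c <- cs].
have szX : size ranksX = size cs by rewrite size_map sz.
transitivity (\sum_(K <- mindices ranksX) \sum_(L <- mindices ranks)
   kprod (size cs) (fun j => basis (nth dflt Xs j)) A K *
   kprod (size cs) (fun j => Mhat n (nth dflt cs j) (nth dflt Xs j)) K L * C0 (b :: L)).
  apply: eq_big_seq => K hK; rewrite chat0E; last by rewrite (size_mindices hK) szX.
  by rewrite big_distrr /=; apply: eq_bigr => L _; rewrite mulrA.
rewrite exchange_big /=; apply: eq_big_seq => L hL.
rewrite -big_distrl /= -szX kprod_mul szX; congr (_ * _).
apply: eq_bigr => j _; have hj : (j < size cs)%N by [].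
rewrite /ranksX (nth_map dflt) ?sz // (augments_proj (hXs j hj)) //.
  by rewrite -(nth_map dflt 0%N nT) // nth_mindices ?size_map.
by rewrite -(nth_map dflt 0%N (fun x => rank x)) // nth_mindices ?size_map.
Qed.

Lemma expand_chat0_mindices r C0 cs Xs J : augments_all cs Xs ->
  J \in mindices (r :: [seq nT c | c <- cs]) ->
  expand Xs (chat0 n C0 cs Xs) J = expand cs C0 J.
Proof.
move=> hXs hJ; have [b [A eJ]] := mindices_cons_inv hJ; subst J.
by apply: expand_chat0 hXs _; move: hJ; rewrite mem_mindices_cons => /andP[].
Qed.

Lemma expand_mprod0 Xs r (C : tens R) (S : mat R) b A : size A = size Xs ->
  expand Xs (mprod 0 r (trm S) C) (b :: A) =
  \sum_(k < r) expand Xs C ((k : nat) :: A) * S k b.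
Proof.
move=> sA; under [RHS]eq_bigr => k _ do rewrite expandE // big_distrl /=.
rewrite expandE // exchange_big /=; apply: eq_bigr => K _.
by rewrite /mprod big_distrr /=; apply: eq_bigr => k _; rewrite /trm /=; ring.
Qed.

Lemma basis_node_cover r C cs Xs c (Qh S : mat R) (Z : 'M[R]_(c, r)) :
  augments_all cs Xs ->
  mx (prodn [seq rank x | x <- Xs]) r
     (trm (matz (r :: [seq rank x | x <- Xs]) 0 (chat0 n (mprod 0 r (trm S) C) cs Xs)))
    = mx (prodn [seq rank x | x <- Xs]) c Qh *m Z ->
  mx (nT (TNode r C cs)) r (basis (TNode r C cs)) *m mx r r S =
  mx (nT (TNode r C cs)) c (basis (TNode c (qtensor c Xs Qh) Xs)) *m Z.
Proof.
move=> hXs hspan; apply/matrixP => a b; rewrite !mxE.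
have ha : (a < prodn [seq nT c | c <- cs])%N by rewrite -(nT_node n r C).
have hA := unflat_mindices ha; set A := unflat _ a in hA *.
have sA : size A = size cs by rewrite size_unflat size_map.
have sAX : size A = size Xs by rewrite sA hXs.1.
under eq_bigr => k _ do rewrite !mxE basis_node.
under [RHS]eq_bigr => l _ do
  rewrite !mxE basis_node (augments_nT hXs) -/A expandE // big_distrl /=.
rewrite -expand_mprod0 // -(expand_chat0 _ _ hXs hA) expandE // exchange_big /=.
apply: eq_big_seq => K hK; have [uK ltK] := unflat_flat hK.
have := congr1 (fun M : 'M[R]_(_, r) => M (Ordinal ltK) b) hspan.
rewrite !mxE /matz /ins_at /rem_at /trm /= !drop0 take0 uK => ->.
by rewrite big_distrr /=; apply: eq_bigr => l _; rewrite qtensorE !mxE; ring.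
Qed.

End Augmentation.

Section ChildRuns.
Variable R : realType.
Variable n : nat -> nat.
Local Notation ttn := (ttn R).
Local Notation dflt := (dflt R).
Local Notation basis := (@Defs.basis R n).
Local Notation nT := (@Defs.nT R n).

Section NestedInduction.
Variable P : ttn -> Prop.
Hypothesis P_leaf : forall l r U, P (TLeaf l r U).
Hypothesis P_node : forall r C cs,
  (forall i, (i < size cs)%N -> P (nth dflt cs i)) -> P (TNode r C cs).

Fixpoint ttn_nested_ind (t : ttn) : P t :=
  match t with
  | TLeaf l r U => P_leaf l r U
  | TNode r C cs => P_node r C
     ((fix all_nth (cs : seq ttn) : forall i, (i < size cs)%N -> P (nth dflt cs i) :=
        match cs return forall i, (i < size cs)%N -> P (nth dflt cs i) with
        | [::] => fun i hi => False_ind _ (Bool.diff_false_true (etrans (esym (ltn0 i)) hi))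
        | c :: cs' => fun i => match i with
                     | 0 => fun _ => ttn_nested_ind c
                     | i'.+1 => fun hi => all_nth cs' i' hi
                     end
        end) cs)
  end.

End NestedInduction.

Lemma fullrank_ttn_child r C cs i : fullrank_ttn (TNode r C cs) -> (i < size cs)%N ->
  fullrank_ttn (nth dflt cs i).
Proof.
move=> hfr hi s hs; apply: hfr; right.
rewrite -(nth_map dflt [::] (@subtrees R)) // in hs.
elim: cs i hi hs => [|c cs IH] [|i] //= hi hs; rewrite List.in_app_iff; [left|right] => //.
exact: IH hs.
Qed.

Lemma fullrank_ttn_root (t : ttn) : fullrank_ttn t -> node_fullrank t.
Proof. by apply; case: t => *; left. Qed.

Definition children_fullrank r (cs : seq ttn) (C : tens R) : Prop :=
  forall i, (i < size cs)%N ->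
    \rank (mx (rank (nth dflt cs i)) (prodn (rem_at i.+1 (r :: [seq rank c | c <- cs])))
              (matz (r :: [seq rank c | c <- cs]) i.+1 C)) = rank (nth dflt cs i).

Lemma children_fullrank_root r C cs :
  fullrank_ttn (TNode r C cs) -> children_fullrank r cs C.
Proof.
move=> /fullrank_ttn_root hC i hi; rewrite -(nth_map dflt 0%N (fun c => rank c)) //.
by apply: (hC i.+1); rewrite /= size_map.
Qed.

Lemma children_fullrank_mprod0 r cs C (S : mat R) : mx r r S \in unitmx ->
  children_fullrank r cs C -> children_fullrank r cs (mprod 0 r (trm S) C).
Proof.
move=> hS hC i hi; have := hC i hi; rewrite -(nth_map dflt 0%N (fun c => rank c)) //.
exact: rank_matz_mprod0.
Qed.

Lemma nodestep_augments r C0 cs F t0 t1 Q S Xs Chat :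
  (forall i, (i < size cs)%N -> forall S F t0 t1 xh,
     ChildRun n (nth dflt cs i) S F t0 t1 xh ->
     mx (rank (nth dflt cs i)) (rank (nth dflt cs i)) S \in unitmx ->
     augments n (nth dflt cs i) xh) ->
  children_fullrank r cs C0 ->
  NodeStep n (ChildRun n) r C0 cs F t0 t1 Q S Xs Chat -> augments_all n cs Xs.
Proof.
move=> IH hC [sz [hch _]]; split => // i hi.
have [_ [_ [hqr hrun]]] := hch i hi.
exact: IH hi _ _ _ _ _ hrun (qr_factor_unit (hC i hi) hqr).
Qed.

Lemma spans_cat_range m c (U : mat R) k1 (A : mat R) k2 (B : mat R) :
  spans_cat m c U k1 A k2 B -> exists X : 'M[R]_(c, k2), mx m k2 B = mx m c U *m X.
Proof.
rewrite /spans_cat => /andP[_]; rewrite col_mx_sub => /andP[_] /submxP [D hD].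
by exists D^T; rewrite -[LHS]trmxK hD trmx_mul trmxK.
Qed.

(* A child is started from X^0 x_0 S^T, so only the range of U^0 S is seen by
   the augmentation; it is all of range U^0 because S is invertible. *)
Lemma childrun_augments (c : ttn) S F t0 t1 xh : ChildRun n c S F t0 t1 xh ->
  fullrank_ttn c -> mx (rank c) (rank c) S \in unitmx -> augments n c xh.
Proof.
elim/ttn_nested_ind: c S F t0 t1 xh => [l r U0|r C cs IH] S F t0 t1 xh run hfr hS.
  inversion run as [l' r' U' S' F' t0' t1' Y c' Uh _ ho hsp|]; subst.
  by split => //; apply: spans_cat_range hsp.
inversion run as [|r' C' cs' S' F' t0' t1' C1 Xs Ch0 c Qh hrun ho hsp]; subst.
inversion hrun as [r'' C0 cs'' F'' t0'' t1'' Q S'' Xs' Chat hstep]; subst.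
have hXs : augments_all n cs Xs.
  apply: nodestep_augments hstep.
    by move=> i hi ? ? ? ? ? hr; apply: IH hi _ _ _ _ _ hr (fullrank_ttn_child hfr hi).
  exact: children_fullrank_mprod0 (children_fullrank_root hfr).
have eN : nT (TNode c (qtensor c Xs Qh) Xs) = nT (TNode r C cs).
  by rewrite !nT_node (augments_nT hXs).
split => //; first by rewrite -eN; apply: orthocols_node (augments_orthocols hXs) _.
have [Z hZ] := spans_cat_range hsp.
exists (Z *m invmx (mx r r S)); rewrite mulmxA -[LHS](mulmxK hS); congr (_ *m _).
exact: (basis_node_cover hXs hZ).
Qed.

End ChildRuns.

Section Calculus.
Local Open Scope classical_set_scope.
Variable R : realType.

Lemma cvg_sum_seq (T : Type) (X : eqType) (F : set_system T) {FF : Filter F}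
    (l : seq X) (f : X -> T -> R) (a : X -> R) :
  (forall x, x \in l -> f x @ F --> a x) ->
  (fun t => \sum_(x <- l) f x t) @ F --> \sum_(x <- l) a x.
Proof.
move=> h; rewrite big_seq; under eq_fun do rewrite big_seq.
by apply: cvg_big => //; apply: add_continuous.
Qed.

Lemma sum_sqr_le_sqr_sum (l : seq (seq nat)) (f : seq nat -> R) :
  \sum_(J <- l) f J * f J <= (\sum_(J <- l) `|f J|) ^+ 2.
Proof.
elim: l => [|x l IH]; first by rewrite !big_nil expr0n.
rewrite !big_cons; have hS : 0 <= \sum_(J <- l) `|f J| by rewrite sumr_ge0.
have hx : f x * f x = `|f x| ^+ 2 by rewrite real_normK ?num_real // expr2.
have := normr_ge0 (f x); nra.
Qed.

Lemma normT_le_sum D (H : tens R) : normT D H <= \sum_(J <- mindices D) `|H J|.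
Proof.
have hS : 0 <= \sum_(J <- mindices D) `|H J| by rewrite sumr_ge0.
by rewrite -(ger0_norm hS) -sqrtr_sqr ler_wsqrtr // sum_sqr_le_sqr_sum.
Qed.

Lemma innerT_ge0 D (X : tens R) : 0 <= innerT D X X.
Proof. by apply: sumr_ge0 => J _; rewrite -expr2 sqr_ge0. Qed.

Lemma normT_sqr D (X : tens R) : normT D X ^+ 2 = innerT D X X.
Proof. by rewrite /normT sqr_sqrtr // innerT_ge0. Qed.

Lemma C1_remainder_cvg D E gradE X (T : Type) (F : set_system T) {FF : Filter F}
    (H : T -> tens R) (w : T -> R) (M : R) :
  C1_with_gradient D E gradE ->
  (fun s => \sum_(J <- mindices D) `|H s J|) @ F --> 0 ->
  (\forall s \near F, \sum_(J <- mindices D) `|H s J| <= M * `|w s|) ->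
  (fun s => (w s)^-1 * (E (addT X (H s)) - E X - innerT D (gradE X) (H s))) @ F --> 0.
Proof.
move=> [_ [hdiff _]] hH hHw; apply/cvgrPdist_le => eps eps0.
have M1 : 0 < `|M| + 1 by rewrite ltr_wpDl.
have [del del0 hdel] := hdiff X (eps / (`|M| + 1)) (divr_gt0 eps0 M1).
have Hdel : \forall s \near F, `|\sum_(J <- mindices D) `|H s J| | < del.
  by move/cvgr0_norm_lt: hH; apply.
near=> s; rewrite sub0r normrN normrM normfV.
have hN : normT D (H s) < del.
  apply: le_lt_trans (normT_le_sum D (H s)) _.
  by near: s; move: Hdel; apply: filterS => s; rewrite ger0_norm // sumr_ge0.
have hM : normT D (H s) <= (`|M| + 1) * `|w s|.
  apply: le_trans (normT_le_sum D (H s)) _; apply: le_trans (_ : M * `|w s| <= _).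
    by near: s.
  by rewrite ler_wpM2r // (le_trans (ler_norm M)) // lerDl.
have [w0|wn0] := eqVneq (w s) 0; first by rewrite w0 normr0 invr0 mul0r ltW.
rewrite ler_pdivrMl ?normr_gt0 //; apply: le_trans (hdel _ hN) _.
apply: le_trans (ler_wpM2l _ hM) _; first by rewrite divr_ge0 // ltW.
by rewrite mulrA divfK ?gt_eqF // mulrC.
Unshelve. all: by end_near.
Qed.

Lemma cvg_sum_norm0 D (T : Type) (F : set_system T) {FF : Filter F}
    (H : T -> tens R) :
  (forall J, J \in mindices D -> (fun s => H s J) @ F --> 0) ->
  (fun s => \sum_(J <- mindices D) `|H s J|) @ F --> 0.
Proof.
move=> hH; have z : \sum_(J <- mindices D) `|0 : R| = 0.
  by rewrite big1 // => J _; rewrite normr0.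
rewrite -[X in _ --> X]z.
by apply: cvg_sum_seq => J hJ; apply: cvg_norm; apply: hH.
Qed.

Lemma cvg_innerT0 D (Z : tens R) (T : Type) (F : set_system T) {FF : Filter F}
    (H : T -> tens R) :
  (forall J, J \in mindices D -> (fun s => H s J) @ F --> 0) ->
  (fun s => innerT D Z (H s)) @ F --> 0.
Proof.
move=> hH; have z : \sum_(J <- mindices D) Z J * 0 = 0.
  by rewrite big1 // => J _; rewrite mulr0.
rewrite -[X in _ --> X]z.
by apply: cvg_sum_seq => J hJ; apply: cvgM; [apply: cvg_cst | apply: hH].
Qed.

Lemma C1_cvg D E gradE (T : Type) (F : set_system T) {FF : Filter F}
    (y : T -> tens R) (y0 : tens R) :
  C1_with_gradient D E gradE ->
  (forall J, J \in mindices D -> (fun s => y s J) @ F --> y0 J) ->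
  (fun s => E (y s)) @ F --> E y0.
Proof.
move=> hC1 hy; pose H s := subT (y s) y0.
have hH J : J \in mindices D -> (fun s => H s J) @ F --> 0.
  by move=> hJ; rewrite -(subrr (y0 J)); apply: cvgB; [apply: hy | apply: cvg_cst].
have hH1 := @cvg_sum_norm0 D T F FF H hH.
have hbound : \forall s \near F, \sum_(J <- mindices D) `|H s J| <= 1 * `|1 : R|.
  apply: filterS (cvgr0_norm_le _ hH1 _ ltr01) => s.
  by rewrite normr1 mul1r ger0_norm // sumr_ge0.
have -> : E y0 = E y0 + 0 + 0 by rewrite !addr0.
apply: cvg_trans (near_eq_cvg _) (cvgD (cvgD (cvg_cst (E y0))
  (C1_remainder_cvg y0 hC1 hH1 hbound)) (cvg_innerT0 (gradE y0) hH)).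
near=> s; rewrite !fctE.
have -> : addT y0 (H s) = y s by apply/funext => J; rewrite /addT /H /subT addrC subrK.
by rewrite invr1 mul1r; ring.
Unshelve. all: by end_near.
Qed.

Lemma is_derive1P (f : R -> R) (t l : R) :
  is_derive t (1 : R) f l <-> (fun h => h^-1 * (f (h + t) - f t)) @ 0^' --> l.
Proof.
have -> : (fun h => h^-1 * (f (h + t) - f t)) =
          (fun h => h^-1 *: ((f \o shift t) (h *: 1) - f t)).
  by apply/funext => h; rewrite /= [h%:A]mulr1.
split => [[hd <-] | hl]; first exact: hd.
by apply: DeriveDef; [apply/cvg_ex; exists l | apply: cvg_lim hl].
Qed.

Lemma C1_chain_rule D E gradE (y : R -> tens R) (t : R) (dy : tens R) :
  C1_with_gradient D E gradE ->
  (forall J, J \in mindices D -> is_derive t (1 : R) (fun s => y s J) (dy J)) ->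
  is_derive t (1 : R) (fun s => E (y s)) (innerT D (gradE (y t)) dy).
Proof.
move=> hC1 hy; apply/is_derive1P; set G := gradE (y t).
pose q h : tens R := fun J => h^-1 * (y (h + t) J - y t J).
pose H h : tens R := fun J => h * q h J.
have hq J : J \in mindices D -> (fun h => q h J) @ 0^' --> dy J.
  by move=> /hy /is_derive1P.
have hH J : J \in mindices D -> (fun h => H h J) @ 0^' --> 0.
  move=> hJ; rewrite -[X in _ --> X](mul0r (dy J)).
  by apply: (cvgM (f := fun h => h)); [apply: cvg_within | apply: hq].
set M := \sum_(J <- mindices D) `|dy J|.
have hbound : \forall h \near 0^', \sum_(J <- mindices D) `|H h J| <= (M + 1) * `|h|.
  have hS : (fun h => \sum_(J <- mindices D) `|q h J|) @ 0^' --> M.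
    by apply: cvg_sum_seq => J hJ; apply: cvg_norm; apply: hq.
  apply: filterS (cvgr_dist_lt _ _ hS _ ltr01) => h hM.
  rewrite (eq_bigr (fun J => `|h| * `|q h J|)) => [|J _]; last by rewrite normrM.
  rewrite -big_distrr /= mulrC ler_wpM2r //.
  by move: hM; rewrite ltr_distlC => /andP[_ /ltW].
have hlin : (fun h => \sum_(J <- mindices D) G J * q h J) @ 0^' --> innerT D G dy.
  by apply: cvg_sum_seq => J hJ; apply: cvgM; [apply: cvg_cst | apply: hq].
rewrite -[X in _ --> X]add0r.
apply: cvg_trans (near_eq_cvg _)
  (cvgD (C1_remainder_cvg (y t) hC1 (cvg_sum_norm0 hH) hbound) hlin).
near=> h; rewrite !fctE -/G.
have h0 : h != 0 by near: h; apply: nbhs_dnbhs_neq.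
have -> : addT (y t) (H h) = y (h + t).
  by apply/funext => J; rewrite /addT /H /q mulVKf // addrC subrK.
have -> : innerT D G (H h) = h * \sum_(J <- mindices D) G J * q h J.
  by rewrite /innerT big_distrr; apply: eq_bigr => J _; rewrite /H mulrCA.
by rewrite mulrBr mulKf // subrK.
Unshelve. all: by end_near.
Qed.

Lemma is_derive_sum_seq (X : eqType) (l : seq X) (f : X -> R -> R) (df : X -> R)
    (t : R) :
  (forall x, x \in l -> is_derive t (1 : R) (f x) (df x)) ->
  is_derive t (1 : R) (fun s => \sum_(x <- l) f x s) (\sum_(x <- l) df x).
Proof.
have -> : (fun s => \sum_(x <- l) f x s) = \sum_(x <- l) f x.
  by apply/funext => s; rewrite fct_sumE.
elim: l => [|x l IH] hl; first by rewrite !big_nil; apply: is_derive_cst.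
rewrite !big_cons; apply: is_deriveD; first by apply: hl; rewrite mem_head.
by apply: IH => y hy; apply: hl; rewrite inE hy orbT.
Qed.

Lemma itv_affine (a b t : R) : a < b -> a < t < b ->
  exists2 mu, 0 <= mu <= 1 & t = a + mu * (b - a).
Proof.
move=> ab /andP[lt_at lt_tb]; have ba : 0 < b - a by rewrite subr_gt0.
exists ((t - a) / (b - a)); last by rewrite divfK ?gt_eqF // addrC subrK.
apply/andP; split; first by rewrite divr_ge0 // subr_ge0 ltW.
by rewrite ler_pdivrMr // mul1r lerD2r ltW.
Qed.

Lemma mvt_descent (f df : R -> R) (a b c : R) : a < b ->
  (forall x, x \in `]a, b[%R -> is_derive x (1 : R) f (df x)) ->
  {within `[a, b], continuous f} ->
  (forall x, a < x < b -> df x <= - c) -> f b <= f a - c * (b - a).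
Proof.
move=> ab hd hc hle; have [x hx e] := MVT ab hd hc.
rewrite in_itv /= in hx; have := hle x hx.
have : 0 <= b - a by rewrite subr_ge0 ltW.
nra.
Qed.

Lemma C1_energy_decay D E gradE (Y V : R -> tens R) Y0 (t0 t1 c : R) :
  C1_with_gradient D E gradE -> t0 < t1 ->
  ode_sol D (fun t _ => V t) t0 t1 Y0 Y ->
  (forall t, t0 < t < t1 -> innerT D (gradE (Y t)) (V t) <= - c) ->
  E (Y t1) <= E Y0 - c * (t1 - t0).
Proof.
move=> hC1 ht hY hV.
have -> : E Y0 = E (Y t0) by case: hC1 => hext _; apply: hext => J /hY [->].
apply: (mvt_descent (f := fun t => E (Y t))
                    (df := fun t => innerT D (gradE (Y t)) (V t)) ht _ _ hV).
  move=> x; rewrite in_itv /= => hx.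
  by apply: C1_chain_rule hC1 _ => J /hY [_ [_]]; apply.
by move=> x; apply: C1_cvg hC1 _ => J /hY [_ [hc _]]; apply: hc.
Qed.

End Calculus.

Section GalerkinFlow.
Variable R : realType.
Variable n : nat -> nat.
Local Notation ttn := (ttn R).
Local Notation dflt := (dflt R).
Local Notation basis := (@Defs.basis R n).
Local Notation nT := (@Defs.nT R n).
Local Notation expand := (@Defs.expand R n).
Local Notation project := (@Defs.project R n).

Lemma expand_adjoint r Xs (Z C : tens R) :
  innerT (r :: [seq nT x | x <- Xs]) Z (expand Xs C) =
  innerT (r :: [seq rank x | x <- Xs]) (project Xs Z) C.
Proof.
rewrite /innerT !sum_mindices_cons; apply: eq_bigr => b _.
transitivity (\sum_(A <- mindices [seq nT x | x <- Xs])
    \sum_(K <- mindices [seq rank x | x <- Xs])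
    Z (b :: A) * (kprod (size Xs) (fun j => basis (nth dflt Xs j)) A K * C (b :: K))).
  by apply: eq_big_seq => A hA; rewrite expandE ?big_distrr // (size_mindices hA) size_map.
rewrite exchange_big /=; apply: eq_big_seq => K hK.
rewrite projectE ?big_distrl /=; last by rewrite (size_mindices hK) size_map.
apply: eq_bigr => A _.
have -> : kprod (size Xs) (fun j => trm (basis (nth dflt Xs j))) K A =
          kprod (size Xs) (fun j => basis (nth dflt Xs j)) A K by [].
by ring.
Qed.

Lemma galerkin_energy_rate r Xs (Z : tens R) :
  innerT (r :: [seq nT x | x <- Xs]) Z (expand Xs (project Xs (fun J => - Z J))) =
  - normT (r :: [seq rank x | x <- Xs]) (project Xs Z) ^+ 2.
Proof.
rewrite expand_adjoint normT_sqr /Defs.project mprods_from_opp /innerT -sumrN.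
by apply: eq_bigr => J _; rewrite mulrN.
Qed.

Lemma expand_ode_sol r Xs Fc t0 t1 C0 (Chat : R -> tens R) :
  ode_sol (r :: [seq rank x | x <- Xs]) Fc t0 t1 C0 Chat ->
  ode_sol (r :: [seq nT x | x <- Xs]) (fun t _ => expand Xs (Fc t (Chat t))) t0 t1
          (expand Xs C0) (fun t => expand Xs (Chat t)).
Proof.
move=> hC J hJ; have [b [A eJ]] := mindices_cons_inv hJ; subst J.
move: hJ; rewrite mem_mindices_cons => /andP[hb hA].
have sA : size A = size Xs by rewrite (size_mindices hA) size_map.
have hK K : K \in mindices [seq rank x | x <- Xs] ->
    b :: K \in mindices (r :: [seq rank x | x <- Xs]) by rewrite mem_mindices_cons hb.
have -> : (fun s => expand Xs (Chat s) (b :: A)) =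
    fun s => \sum_(K <- mindices [seq rank x | x <- Xs])
               kprod (size Xs) (fun j => basis (nth dflt Xs j)) A K * Chat s (b :: K).
  by apply/funext => s; rewrite expandE.
rewrite !expandE //; split; [|split].
- by apply: eq_big_seq => K /hK /hC [->].
- move=> x; apply: cvg_sum_seq => K /hK /hC [_ [hc _]].
  by apply: cvgM; [apply: cvg_cst | apply: hc].
- move=> x hx; rewrite expandE //; apply: is_derive_sum_seq => K /hK /hC [_ [_ hd]].
  by apply: is_deriveZ; apply: hd.
Qed.

End GalerkinFlow.

Unset Implicit Arguments.

Theorem theorem6p4 (R : realType) (n : nat -> nat) (d : nat)
  (C0 : tens R) (cs : seq (ttn R))
  (E : tens R -> R) (gradE : tens R -> tens R) (t0 t1 : R)
  (Q S : nat -> mat R) (Xhs : seq (ttn R)) (Chat : R -> tens R) :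
  let Y0 := TNode 1%N C0 cs in
  wf_tree Y0 ->
  perm_eq (leaves Y0) (iota 1 d) ->
  ortho_ttn n Y0 ->
  fullrank_ttn Y0 ->
  C1_with_gradient (1%N :: [seq nT n c | c <- cs]) E gradE ->
  t0 < t1 ->
  NodeStep n (ChildRun n) 1%N C0 cs (fun t Y J => - gradE Y J) t0 t1 Q S Xhs Chat ->
  let h := t1 - t0 in
  let Yhat := fun t => xt n (TNode 1%N (Chat t) Xhs) in
  let g := fun mu => normT (1%N :: [seq rank x | x <- Xhs])
                           (project n Xhs (gradE (Yhat (t0 + mu * h)))) in
  forall alpha : R,
    (exists2 mu : R, 0 <= mu <= 1 & alpha = g mu) ->
    (forall mu : R, 0 <= mu <= 1 -> alpha <= g mu) ->
    E (Yhat t1) <= E (xt n Y0) - alpha ^+ 2 * h.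
Proof.
move=> Y0 _ _ _ hfr hC1 ht hstep h Yhat g alpha [mu0 _ ->] hmin.
have hXs : augments_all n cs Xhs.
  apply: nodestep_augments hstep; last exact: children_fullrank_root hfr.
  move=> i hi ? ? ? ? ? hrun.
  exact: childrun_augments hrun (fullrank_ttn_child hfr hi).
case: hstep => _ [_ /(expand_ode_sol (n := n)) hY]; rewrite (augments_nT hXs) in hY.
have -> : E (xt n Y0) = E (Defs.expand n Xhs (chat0 n C0 cs Xhs)).
  by case: hC1 => hext _; apply: hext => J /(expand_chat0_mindices _ hXs) ->.
apply: (C1_energy_decay hC1 ht hY) => t ht'.
rewrite -(augments_nT hXs) galerkin_energy_rate lerN2.
have [mu hmu ->] := itv_affine ht ht'.
by rewrite lerXn2r ?nnegrE ?sqrtr_ge0 //; apply: hmin.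
Qed.
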